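(* Let $G$ be a connected bipartite graph with bipartition $(A,B)$, with $|A|,|B|\ge2$, that admits no 1-join. Then there exists $a\in A$ such that $G\setminus N[a]$ is connected.
   Context: $N[a]$ is the set consisting of $a$ and its neighbours. $G$ admits a 1-join $(V_1,V_2)$ if $(V_1,V_2)$ is a partition of $V(G)$ with $|V_1|,|V_2|\ge2$ and there are $X_1\subseteq V_1$, $X_2\subseteq V_2$ such that $X_1$ is complete to $X_2$ and there are no other edges between $V_1$ and $V_2$. *)

From mathcomp Require Import all_boot.
Set Implicit Arguments. Unset Strict Implicit. Unset Printing Implicit Defensive.

Definition simple_graph (T : finType) (e : rel T) : Prop :=
  symmetric e /\ irreflexive e.

Definition closed_nbhd (T : finType) (e : rel T) (a : T) : {set T} :=
  a |: [set x | e a x].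

Definition induced_rel (T : finType) (e : rel T) (S : {set T}) : rel T :=
  [rel u v | [&& u \in S, v \in S & e u v]].

Definition connected_on (T : finType) (e : rel T) (S : {set T}) : Prop :=
  forall x y, x \in S -> y \in S -> connect (induced_rel e S) x y.

Definition connected_graph (T : finType) (e : rel T) : Prop :=
  connected_on e [set: T].

Definition bipartition (T : finType) (e : rel T) (A B : {set T}) : Prop :=
  [/\ A :&: B = set0, A :|: B = [set: T] &
      forall u v, e u v -> (u \in A) && (v \in B) || (u \in B) && (v \in A)].

Definition is_one_join (T : finType) (e : rel T) (V1 V2 : {set T}) : Prop :=
  [/\ V1 :&: V2 = set0, V1 :|: V2 = [set: T], 1 < #|V1|, 1 < #|V2| &
      exists X1 X2 : {set T},
        [/\ X1 \subset V1, X2 \subset V2 &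
            forall u v, u \in V1 -> v \in V2 -> e u v = (u \in X1) && (v \in X2)]].

Definition admits_one_join (T : finType) (e : rel T) : Prop :=
  exists V1 V2 : {set T}, is_one_join e V1 V2.

From mathcomp Require Import all_boot.

Set Implicit Arguments.
Unset Strict Implicit.
Unset Printing Implicit Defensive.

(* Among all pairs (a, x) with a in A and x outside N[a], pick one maximising
   the component C of x in G \ N[a].  If G \ N[a] is disconnected, let V1 be C
   together with its neighbours.  The vertices of V1 outside C are neighbours
   of a, hence lie in B, so every edge leaving V1 goes from V1 \ C to A \ V1.
   Conversely, if some u in V1 \ C were not adjacent to some v in A \ V1, then
   C and u would lie in one component of G \ N[v], contradicting maximality.
   Hence V1 and its complement form a 1-join, with X1 = V1 \ C, X2 = A \ V1. *)

Section Components.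
Variables (T : finType) (e : rel T).

Definition component (S : {set T}) (x : T) : {set T} :=
  [set y | connect (induced_rel e S) x y].

Definition closed_nbhd_set (C : {set T}) : {set T} :=
  C :|: [set v | [exists c in C, e c v]].

Lemma in_setC_closed_nbhd a z :
  (z \in ~: closed_nbhd e a) = (z != a) && ~~ e a z.
Proof. by rewrite /closed_nbhd !inE negb_or. Qed.

Lemma mem_component (S : {set T}) x : x \in component S x.
Proof. by rewrite inE connect0. Qed.

Lemma component_sub (S : {set T}) x : x \in S -> component S x \subset S.
Proof.
move=> xS; apply/subsetP => y; rewrite inE => /connectP [p pth ->].
case/lastP: p pth => [|p z] //=.
by rewrite rcons_path last_rcons => /andP [_ /and3P [_ ->]].
Qed.

Lemma component_closed (S : {set T}) x c z :
  x \in S -> c \in component S x -> z \in S -> e c z -> z \in component S x.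
Proof.
move=> xS cC zS ecz; have cS := subsetP (component_sub xS) c cC.
move: cC; rewrite !inE => xc; apply: connect_trans xc (connect1 _).
exact/and3P.
Qed.

Lemma component_mono (S S' : {set T}) x :
  component S x \subset S' -> component S x \subset component S' x.
Proof.
move=> CS'; apply/subsetP => y; rewrite !inE => /connectP [p pth ->].
apply/connectP; exists p => //.
have pS' : all (mem S') (x :: p).
  by apply/allP => z /(path_connect pth) xz; apply: (subsetP CS'); rewrite inE.
by apply: sub_in_path pS' pth => u v uS' vS' /and3P [_ _ euv]; apply/and3P.
Qed.

Lemma connected_graph_neighbour x y :
  connected_graph e -> x != y -> exists z, e x z.
Proof.
move=> conn xy; have /connectP [[|z p] /= pth yE] := conn x y (in_setT x) (in_setT y).
  by rewrite yE eqxx in xy.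
by case/andP: pth => /and3P [_ _ exz] _; exists z.
Qed.

Hypothesis sym_e : symmetric e.

Lemma induced_rel_sym (S : {set T}) : symmetric (induced_rel e S).
Proof. by move=> u v; rewrite /induced_rel /= sym_e andbCA. Qed.

Lemma connected_on_component (S : {set T}) x : S \subset component S x -> connected_on e S.
Proof.
move=> SC y z /(subsetP SC) + /(subsetP SC); rewrite !inE => xy xz.
by apply: connect_trans _ xz; rewrite (sym_connect_sym (induced_rel_sym S)).
Qed.

Lemma component_boundary a x u :
  x \in ~: closed_nbhd e a ->
  u \in closed_nbhd_set (component (~: closed_nbhd e a) x) ->
  u \notin component (~: closed_nbhd e a) x -> e a u.
Proof.
move=> xS; rewrite inE => /orP [-> //|]; rewrite inE => /existsP [c /andP [cC ecu]] uC.
have uN : u \notin ~: closed_nbhd e a.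
  by apply: contra uC => uS; apply: component_closed ecu.
have := subsetP (component_sub xS) c cC.
rewrite !in_setC_closed_nbhd negb_and !negbK in uN *.
case/orP: uN => [/eqP ua|//]; by rewrite -ua sym_e ecu andbF.
Qed.

End Components.

Section Bipartition.
Variables (T : finType) (e : rel T) (A B : {set T}).
Hypothesis bip : bipartition e A B.

Lemma bipartition_notinB u : u \in A -> u \notin B.
Proof.
case: bip => AB0 _ _ uA; apply/negP => uB.
by have := in_set0 u; rewrite -AB0 inE uA uB.
Qed.

Lemma bipartition_edgeA u v : u \in A -> e u v -> v \in B.
Proof.
case: bip => _ _ hE uA /hE /orP [/andP [_ ->] //|/andP [uB _]].
by rewrite (negbTE (bipartition_notinB uA)) in uB.
Qed.

Lemma bipartition_edgeB u v : u \in B -> e u v -> v \in A.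
Proof.
case: bip => _ _ hE uB /hE /orP [/andP [uA _]|/andP [_ ->] //].
by rewrite (negbTE (bipartition_notinB uA)) in uB.
Qed.

End Bipartition.

Section MaximalComponent.
Variables (T : finType) (e : rel T) (A B : {set T}).
Hypotheses (sym_e : symmetric e) (irr_e : irreflexive e).
Hypothesis bip : bipartition e A B.
Variables (a x : T).
Hypotheses (aA : a \in A) (xS : x \in ~: closed_nbhd e a).

Let C := component e (~: closed_nbhd e a) x.
Let NC := closed_nbhd_set e C.

Lemma boundary_in_B u : u \in NC -> u \notin C -> u \in B.
Proof.
by move=> uN uC; apply: (bipartition_edgeA bip aA); apply: component_boundary uN uC.
Qed.

Lemma edge_leaving_closure u v :
  u \in NC -> v \in ~: NC -> e u v -> (u \in NC :\: C) && (v \in ~: NC :&: A).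
Proof.
move=> uN; rewrite in_setC => vN euv.
have uC : u \notin C.
  apply: contra vN => uC; rewrite inE; apply/orP; right; rewrite inE.
  by apply/existsP; exists u; rewrite uC.
rewrite in_setD in_setI in_setC uC uN vN /=.
exact: (bipartition_edgeB bip (boundary_in_B uN uC) euv).
Qed.

Lemma component_avoids_nbhd v : v \notin NC -> C \subset ~: closed_nbhd e v.
Proof.
move=> vN; apply/subsetP => c cC; rewrite in_setC_closed_nbhd.
apply/andP; split.
  by apply: contraNneq vN => <-; rewrite inE cC.
apply: contra vN => evc; rewrite inE; apply/orP; right; rewrite inE.
by apply/existsP; exists c; rewrite cC sym_e.
Qed.

Hypothesis C_max : forall b y, b \in A -> y \in ~: closed_nbhd e b ->
  #|component e (~: closed_nbhd e b) y| <= #|C|.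

Lemma boundary_complete u v : u \in NC :\: C -> v \in ~: NC :&: A -> e u v.
Proof.
case/setDP => uN uC; rewrite in_setI in_setC => /andP [vN vA]; apply: contraT => nuv.
set Cv := component e (~: closed_nbhd e v) x.
have CCv : C \subset Cv by apply: component_mono; exact: component_avoids_nbhd.
have uSv : u \in ~: closed_nbhd e v.
  rewrite in_setC_closed_nbhd (sym_e v u) nuv andbT.
  by apply: contraTneq (boundary_in_B uN uC) => ->; exact: (bipartition_notinB bip vA).
have xSv : x \in ~: closed_nbhd e v.
  by apply: (subsetP (component_avoids_nbhd vN)); apply: mem_component.
have uCv : u \in Cv.
  move: uN; rewrite inE (negbTE uC) inE => /existsP [c /andP [cC ecu]].
  exact: component_closed xSv (subsetP CCv c cC) uSv ecu.
have uCCv : u |: C \subset Cv by rewrite subUset sub1set uCv.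
have := leq_trans (subset_leq_card uCCv) (C_max vA xSv).
by rewrite cardsU1 uC ltnn.
Qed.

Lemma closure_card_gt1 : connected_graph e -> 1 < #|NC|.
Proof.
move=> conn; have xa : x != a by move: xS; rewrite in_setC_closed_nbhd => /andP [].
have [z exz] := connected_graph_neighbour conn xa.
have xC : x \in C by apply: mem_component.
apply/card_gt1P; exists x, z; split.
- by rewrite inE xC.
- by rewrite !inE; apply/orP; right; apply/existsP; exists x; rewrite xC.
- by apply: contraTneq exz => ->; rewrite irr_e.
Qed.

Lemma complement_closure_card_gt1 w :
  w \in ~: closed_nbhd e a -> w \notin C -> 1 < #|~: NC|.
Proof.
move=> wS wC.
have CS c : c \in C -> c \in ~: closed_nbhd e a := subsetP (component_sub e xS) c.
apply/card_gt1P; exists a, w; split.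
- rewrite in_setC in_setU negb_or; apply/andP; split.
    by apply/negP => /CS; rewrite in_setC_closed_nbhd eqxx.
  rewrite inE; apply/existsPn => c; apply/negP => /andP [/CS cS eca].
  by move: cS; rewrite in_setC_closed_nbhd sym_e eca andbF.
- rewrite in_setC in_setU negb_or wC inE /=.
  apply/existsPn => c; apply/negP => /andP [cC ecw].
  by move: wC; rewrite (component_closed xS cC wS ecw).
- by move: wS; rewrite in_setC_closed_nbhd eq_sym => /andP [].
Qed.

Lemma maximal_component_one_join w :
  connected_graph e -> w \in ~: closed_nbhd e a -> w \notin C ->
  is_one_join e NC (~: NC).
Proof.
move=> conn wS wC; split.
- exact: setICr.
- exact: setUCr.
- exact: closure_card_gt1.
- exact: complement_closure_card_gt1 wS wC.
exists (NC :\: C), (~: NC :&: A); split; [exact: subsetDl | exact: subsetIl|].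
move=> u v uN vN; apply/idP/idP => [euv | /andP [uD vA]].
  exact: edge_leaving_closure.
exact: boundary_complete.
Qed.

End MaximalComponent.

Theorem mainTheorem19 (T : finType) (e : rel T) (A B : {set T}) :
  simple_graph e ->
  connected_graph e ->
  bipartition e A B ->
  1 < #|A| -> 1 < #|B| ->
  ~ admits_one_join e ->
  exists2 a, a \in A & connected_on e (~: closed_nbhd e a).
Proof.
move=> [sym irr] conn bip cA _ nJ.
have [a0 a0A] : exists a0, a0 \in A by apply/set0Pn; rewrite -card_gt0 ltnW.
have [S0|[y0 y0S]] := set_0Vmem (~: closed_nbhd e a0).
  by exists a0 => // y z; rewrite S0 inE.
pose P (p : T * T) := (p.1 \in A) && (p.2 \in ~: closed_nbhd e p.1).
have P0 : P (a0, y0) by apply/andP.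
case: (arg_maxnP (fun p => #|component e (~: closed_nbhd e p.1) p.2|) P0).
move=> [a x] /andP /= [aA xS] maxC; exists a => //.
have [|/subsetPn [w wS wC]] := boolP (~: closed_nbhd e a \subset
                                       component e (~: closed_nbhd e a) x).
  exact: connected_on_component.
have maxC' b y : b \in A -> y \in ~: closed_nbhd e b ->
    #|component e (~: closed_nbhd e b) y| <= #|component e (~: closed_nbhd e a) x|.
  by move=> bA yS; apply: (maxC (b, y)); apply/andP.
case: nJ; do 2 eexists.
exact: (maximal_component_one_join sym irr bip aA xS maxC' conn wS wC).
Qed.
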